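(* Let $X$ be a Banach space and $\{P_i\}_{i\in I}$ a family of (linear idempotent) projections on $X$. The following are equivalent: (a) $\{P_i\}_{i\in I}$ is uniformly convex, i.e. $\|P_i\|\le 1$ for every $i\in I$, and for every $\varepsilon>0$ there is $\delta(\varepsilon)>0$ such that $\|x-P_ix\|<\varepsilon$ for every $i\in I$ whenever $\|x\|=1$ and $\|x+P_ix\|>2-\delta(\varepsilon)$. (b) For every $\varepsilon>0$ there is $\delta(\varepsilon)>0$ such that $\|x-P_ix\|<\varepsilon$ for every $i\in I$ whenever $x\in B_X$ and $\|x\|-\|P_ix\|<\delta(\varepsilon)$. (c) For every $\varepsilon>0$ there is $\delta(\varepsilon)>0$ such that $\|x-P_ix\|<\varepsilon$ for every $i\in I$ whenever $\|x\|=1$ and $\|P_ix\|>1-\delta(\varepsilon)$. *)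

From HB Require Import structures.
From mathcomp Require Import all_boot all_order all_algebra.
From mathcomp Require Import all_classical all_reals all_analysis.
Set Implicit Arguments. Unset Strict Implicit. Unset Printing Implicit Defensive.
Import Order.TTheory GRing.Theory Num.Theory.
Import numFieldNormedType.Exports.
Local Open Scope ring_scope.

Definition is_projection (K : numFieldType) (X : normedModType K)
  (P : {linear X -> X}) : Prop := forall x, P (P x) = P x.

Definition unif_convex_family (K : numFieldType) (X : normedModType K)
  (I : Type) (P : I -> {linear X -> X}) : Prop :=
  (forall i x, `|P i x| <= `|x|) /\
  (forall eps : K, 0 < eps -> exists2 delta : K, 0 < delta &
     forall i x, `|x| = 1 -> `|x + P i x| > 2 - delta -> `|x - P i x| < eps).

Definition cond_b (K : numFieldType) (X : normedModType K)
  (I : Type) (P : I -> {linear X -> X}) : Prop :=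
  forall eps : K, 0 < eps -> exists2 delta : K, 0 < delta &
     forall i x, `|x| <= 1 -> `|x| - `|P i x| < delta -> `|x - P i x| < eps.

Definition cond_c (K : numFieldType) (X : normedModType K)
  (I : Type) (P : I -> {linear X -> X}) : Prop :=
  forall eps : K, 0 < eps -> exists2 delta : K, 0 < delta &
     forall i x, `|x| = 1 -> `|P i x| > 1 - delta -> `|x - P i x| < eps.

From HB Require Import structures.
From mathcomp Require Import all_boot all_order all_algebra.
From mathcomp Require Import all_classical all_reals all_analysis.
Set Implicit Arguments. Unset Strict Implicit. Unset Printing Implicit Defensive.
Import Order.TTheory GRing.Theory Num.Theory.
Import numFieldNormedType.Exports.
Local Open Scope ring_scope.

(* Condition (c) already forces every P_i to be contractive: if ||P_i x|| > 1
   on the unit sphere, choosing eps = ||P_i x|| - 1 contradicts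
   ||P_i x|| - 1 <= ||x - P_i x||.  For contractions, (b) reduces to (c) by
   rescaling x onto the unit sphere (small x are handled by
   ||x - P_i x|| <= 2||x||), and (a) is equivalent to (c) because
   ||x + P_i x|| <= 1 + ||P_i x|| and, for idempotents,
   2||P_i x|| = ||P_i (x + P_i x)|| <= ||x + P_i x||. *)

Section ProjectionFamilies.
Variables (K : numFieldType) (X : normedModType K) (I : Type).
Variable P : I -> {linear X -> X}.

Lemma normr_normalize (x : X) : x != 0 -> `|(`|x|^-1 *: x)| = 1.
Proof.
by move=> x0; rewrite normrZ normrV ?unitfE ?normr_eq0 // normr_id mulVf ?normr_eq0.
Qed.

Lemma cond_c_contractive : cond_c P -> forall i x, `|P i x| <= `|x|.
Proof.
move=> hc i x; rewrite real_leNgt ?normr_real //; apply/negP => ltxPx.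
have x0 : x != 0.
  by apply: contraTneq ltxPx => ->; rewrite linear0 normr0 ltxx.
have nx_gt0 : 0 < `|x| by rewrite normr_gt0.
set y := `|x|^-1 *: x.
have ny : `|y| = 1 by apply: normr_normalize.
have gt1 : 1 < `|P i y|.
  by rewrite linearZ normrZ gtr0_norm ?invr_gt0 // mulrC ltr_pdivlMr // mul1r.
have e_gt0 : 0 < `|P i y| - 1 by rewrite subr_gt0.
have [d d0 hd] := hc _ e_gt0.
have Py_gt : 1 - d < `|P i y| by apply: lt_trans gt1; rewrite ltrBlDr ltrDl.
have := hd i y ny Py_gt; rewrite distrC => /(le_lt_trans (lerB_dist _ _)).
by rewrite ny ltxx.
Qed.

Lemma cond_b_cond_c : cond_b P -> cond_c P.
Proof.
move=> hb eps eps_gt0; have [d d_gt0 hd] := hb eps eps_gt0.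
exists d => // i x nx Px_gt; apply: hd; first by rewrite nx.
by rewrite nx ltrBlDr addrC -ltrBlDr.
Qed.

Lemma cond_c_cond_b : cond_c P -> cond_b P.
Proof.
move=> hc eps eps_gt0; have [d d_gt0 hd] := hc eps eps_gt0.
have eps2_gt0 : 0 < eps / 2 by rewrite divr_gt0.
exists (d * (eps / 2)); first by rewrite mulr_gt0.
move=> i x nx_le1; rewrite ltrBlDr => Px_gt.
have [nx_lt|nx_ge] := real_ltP (normr_real x) (gtr0_real eps2_gt0).
  apply: le_lt_trans (ler_normB _ _) _; rewrite [eps]splitr.
  by apply: le_lt_trans (lerD (lexx _) (cond_c_contractive hc i x)) _; rewrite ltrD.
have nx_gt0 : 0 < `|x| by apply: lt_le_trans nx_ge.
have nxV_gt0 : 0 < `|x|^-1 by rewrite invr_gt0.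
set y := `|x|^-1 *: x.
have ny : `|y| = 1 by apply: normr_normalize; rewrite -normr_gt0.
have Py_gt : 1 - d < `|P i y|.
  rewrite linearZ normrZ gtr0_norm // mulrC ltr_pdivlMr // mulrBl mul1r ltrBlDr.
  by apply: lt_le_trans Px_gt _; rewrite addrC lerD2l ler_pM2l.
have := hd i y ny Py_gt; rewrite linearZ -scalerBr normrZ gtr0_norm //.
apply: le_lt_trans; rewrite -[leLHS](mulVKf (lt0r_neq0 nx_gt0)).
by apply: ler_piMl => //; rewrite mulr_ge0 ?invr_ge0.
Qed.

Lemma cond_c_unif_convex : cond_c P -> unif_convex_family P.
Proof.
move=> hc; split; first exact: cond_c_contractive.
move=> eps eps_gt0; have [d d_gt0 hd] := hc eps eps_gt0.
exists d => // i x nx sum_gt; apply: hd => //.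
have := lt_le_trans sum_gt (ler_normD _ _).
by rewrite nx -[2]/(1 + 1) -addrA ltrD2l.
Qed.

Lemma unif_convex_cond_c :
  (forall i, is_projection (P i)) -> unif_convex_family P -> cond_c P.
Proof.
move=> hP [contr hu] eps eps_gt0; have [d d_gt0 hd] := hu eps eps_gt0.
exists (d / 2); first by rewrite divr_gt0.
move=> i x nx Px_gt; apply: hd => //.
have P_sum : P i (x + P i x) = P i x *+ 2 by rewrite linearD /= hP.
apply: lt_le_trans (contr i (x + P i x)); rewrite P_sum normrMn.
have -> : 2 - d = (1 - d / 2) *+ 2.
  by rewrite mulrnBl -[d / 2 *+ 2]mulr_natr divfK ?pnatr_eq0.
by rewrite ltrMn2r.
Qed.

End ProjectionFamilies.

Theorem theorem3p5 (K : numFieldType) (X : completeNormedModType K)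
  (I : Type) (P : I -> {linear X -> X})
  (hP : forall i, is_projection (P i)) :
  (unif_convex_family P <-> cond_b P) /\ (cond_b P <-> cond_c P).
Proof.
split; split.
- by move=> /(unif_convex_cond_c hP); apply: cond_c_cond_b.
- by move=> /cond_b_cond_c; apply: cond_c_unif_convex.
- exact: cond_b_cond_c.
- exact: cond_c_cond_b.
Qed.
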